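(* Let $A\subseteq\omega$ be a c.e. set which has a density and let $\epsilon$ be a positive real number. Then $A$ has a computable subset $B$ such that $D(A,B)<\epsilon$.
   Context: For $S\subseteq\omega$ and $n>0$, $\rho_n(S)=|S\cap[0,n)|/n$; the upper density is $\overline{\rho}(S)=\limsup_n\rho_n(S)$ and the density is $\rho(S)=\lim_n\rho_n(S)$ when the limit exists. For $A,B\subseteq\omega$, $D(A,B)=\overline{\rho}(A\triangle B)$, the upper density of the symmetric difference. *)

From Stdlib Require Import Reals List Arith.
From Coquelicot Require Import Coquelicot.
Import ListNotations.

Inductive mu_code : Type :=
| mZero : mu_code
| mSucc : mu_code
| mProj : nat -> mu_code                       (* i-th argument (0-based) *)
| mComp : mu_code -> list mu_code -> mu_code
| mPrec : mu_code -> mu_code -> mu_code        (* primitive recursion on 1st arg *)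
| mMin  : mu_code -> mu_code.                  (* unbounded minimisation on 1st arg *)

Inductive mu_eval : mu_code -> list nat -> nat -> Prop :=
| ev_zero xs : mu_eval mZero xs 0%nat
| ev_succ x xs : mu_eval mSucc (x :: xs) (S x)
| ev_proj (i : nat) xs : (i < length xs)%nat -> mu_eval (mProj i) xs (nth i xs 0%nat)
| ev_comp f gs xs ys y :
    mu_evals gs xs ys -> mu_eval f ys y -> mu_eval (mComp f gs) xs y
| ev_prec0 f g xs y : mu_eval f xs y -> mu_eval (mPrec f g) (0%nat :: xs) y
| ev_precS f g n xs y z :
    mu_eval (mPrec f g) (n :: xs) y -> mu_eval g (n :: y :: xs) z ->
    mu_eval (mPrec f g) (S n :: xs) z
| ev_min f xs n :
    mu_eval f (n :: xs) 0%nat ->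
    (forall m, (m < n)%nat -> exists k, mu_eval f (m :: xs) (S k)) ->
    mu_eval (mMin f) xs n
with mu_evals : list mu_code -> list nat -> list nat -> Prop :=
| evs_nil xs : mu_evals [] xs []
| evs_cons g gs xs y ys :
    mu_eval g xs y -> mu_evals gs xs ys -> mu_evals (g :: gs) xs (y :: ys).

Definition char01 (S : nat -> bool) (n : nat) : nat := if S n then 1%nat else 0%nat.

Definition computable_set (S : nat -> bool) : Prop :=
  exists c : mu_code, forall n, mu_eval c [n] (char01 S n).

Definition ce_set (S : nat -> bool) : Prop :=
  exists c : mu_code, forall n, S n = true <-> exists y, mu_eval c [n] y.

Fixpoint count_below (S : nat -> bool) (n : nat) : nat :=
  match n with
  | 0%nat => 0%nat
  | Datatypes.S m => (count_below S m + char01 S m)%nat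
  end.

Definition rho_n (S : nat -> bool) (n : nat) : R :=
  INR (count_below S n) / INR n.

Definition rho_seq (S : nat -> bool) : nat -> R := fun k => rho_n S (Datatypes.S k).

(* upper density, an extended real (always finite, in [0,1]) *)
Definition upper_density (S : nat -> bool) : Rbar := LimSup_seq (rho_seq S).

Definition has_density (S : nat -> bool) : Prop :=
  exists l : R, is_lim_seq (rho_seq S) (Finite l).

Definition symdiff (A B : nat -> bool) : nat -> bool := fun n => xorb (A n) (B n).

Definition Dist (A B : nat -> bool) : Rbar := upper_density (symdiff A B).

Definition subset_of (B A : nat -> bool) : Prop := forall n, B n = true -> A n = true.

(* Enumerate the c.e. set A in stages A_s and fix a rational a/b slightly below
   its density, so that a N <= b |A ∩ [0,N)| + C for all N.  Put x into B iff x
   is enumerated by the least stage s at which A_s already satisfies this lower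
   bound for all N < 2x+2; B is a computable subset of A.  Given N, the element x
   of [N/2, N) with the least such stage yields
     |(A \ B) ∩ [0,N)| <= (dens A - a/b) N + C/b + |(A \ B) ∩ [0,N/2)|,
   and iterating along N, N/2, N/4, ... bounds the upper density of A \ B by
   twice the small gap dens A - a/b.  Computability of B rests on the fact that
   a fuelled interpreter for mu-recursive codes is itself primitive recursive. *)

From Stdlib Require Import Reals.
From Coquelicot Require Import Coquelicot.
From Stdlib Require Import List Arith Lia ConstructiveEpsilon Lra ZArith.
Import ListNotations.
Open Scope nat_scope.

Fixpoint mu_code_nested_ind (P : mu_code -> Prop)
  (H0 : P mZero) (H1 : P mSucc) (H2 : forall i, P (mProj i))
  (H3 : forall f gs, P f -> Forall P gs -> P (mComp f gs))
  (H4 : forall f g, P f -> P g -> P (mPrec f g))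
  (H5 : forall f, P f -> P (mMin f)) (c : mu_code) {struct c} : P c :=
  let IH := mu_code_nested_ind P H0 H1 H2 H3 H4 H5 in
  match c with
  | mZero => H0
  | mSucc => H1
  | mProj i => H2 i
  | mComp f gs => H3 f gs (IH f)
      ((fix IHs (l : list mu_code) : Forall P l :=
          match l with
          | [] => Forall_nil P
          | g :: l' => Forall_cons g (IH g) (IHs l')
          end) gs)
  | mPrec f g => H4 f g (IH f) (IH g)
  | mMin f => H5 f (IH f)
  end.

Definition signum (x : nat) : nat := match x with 0 => 0 | _ => 1 end.
Definition is_zero (x : nat) : nat := match x with 0 => 1 | _ => 0 end.
Definition prod_list (l : list nat) : nat := fold_right Nat.mul 1 l.

(* A fuelled interpreter, written with arithmetic only so that it can itself be
   compiled into a primitive recursive code.  [eval_fuel s c xs] is [S y] when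
   [c] outputs [y] on [xs] and [0] when no output was found; the fuel [s] only
   bounds the length of the searches performed by [mMin]. *)

Fixpoint prec_loop (F G : list nat -> nat) (xs : list nat) (n : nat) : nat :=
  match n with
  | 0 => F xs
  | S m => let v := prec_loop F G xs m in signum v * G (m :: pred v :: xs)
  end.

(* The state of a search is [0] while searching, [1] once some test has
   produced no output, and [n + 2] once the test at [n] has output [0]. *)
Definition search_step (t w : nat) : nat := is_zero w + is_zero (pred w) * (signum w * S (S t)).

Fixpoint min_search (F : list nat -> nat) (xs : list nat) (t : nat) : nat :=
  match t with
  | 0 => 0
  | S t' => let a := min_search F xs t' in a + is_zero a * search_step t' (F (t' :: xs))
  end.

Fixpoint eval_fuel (s : nat) (c : mu_code) (xs : list nat) {struct c} : nat :=
  match c with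
  | mZero => 1
  | mSucc => match xs with x :: _ => S (S x) | [] => 0 end
  | mProj i => if i <? length xs then S (nth i xs 0) else 0
  | mComp f gs =>
      let ys := map (fun g => eval_fuel s g xs) gs in
      eval_fuel s f (map pred ys) * signum (prod_list ys)
  | mPrec f g =>
      match xs with [] => 0 | n :: xs' => prec_loop (eval_fuel s f) (eval_fuel s g) xs' n end
  | mMin f => pred (min_search (eval_fuel s f) xs s)
  end.

Lemma prod_list_neq0 (l : list nat) : prod_list l <> 0 -> Forall (fun y => y <> 0) l.
Proof.
  induction l as [|y l IH]; simpl; intros H; constructor.
  - intros ->; simpl in H; lia.
  - apply IH; intros E; rewrite E in H; lia.
Qed.

Lemma prod_list_map_S (l : list nat) : prod_list (map S l) <> 0.
Proof. induction l; simpl; lia. Qed.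

Lemma mul_signum_eq_S x p y : x * signum p = S y -> x = S y /\ p <> 0.
Proof. destruct p; simpl; lia. Qed.

Lemma search_step_cases t w :
  (w = 0 /\ search_step t w = 1) \/ (w = 1 /\ search_step t w = S (S t)) \/
  (2 <= w /\ search_step t w = 0).
Proof. destruct w as [|[|w]]; unfold search_step; simpl; lia. Qed.

Lemma min_search_eq0 F xs t :
  min_search F xs t = 0 -> forall m, m < t -> 2 <= F (m :: xs).
Proof.
  induction t as [|t IH]; simpl; intros H m Hm; [lia|].
  destruct (min_search F xs t) eqn:E; simpl in H; [|lia].
  destruct (search_step_cases t (F (t :: xs))) as [[? ?]|[[? ?]|[? ?]]]; try lia.
  destruct (Nat.eq_dec m t) as [->|]; [assumption | apply IH; lia].
Qed.

Lemma min_search_eq_SS F xs t n :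
  min_search F xs t = S (S n) ->
  F (n :: xs) = 1 /\ forall m, m < n -> 2 <= F (m :: xs).
Proof.
  induction t as [|t IH]; simpl; intros H; [lia|].
  destruct (min_search F xs t) eqn:E; simpl in H; [|apply IH; lia].
  destruct (search_step_cases t (F (t :: xs))) as [[? ?]|[[? ?]|[? ?]]]; try lia.
  replace n with t by lia. split; [assumption | exact (min_search_eq0 F xs t E)].
Qed.

Lemma min_search_before F xs n :
  (forall m, m < n -> 2 <= F (m :: xs)) -> forall t, t <= n -> min_search F xs t = 0.
Proof.
  intros Hm t; induction t as [|t IH]; simpl; intros Ht; [reflexivity|].
  rewrite IH by lia; simpl.
  specialize (Hm t ltac:(lia)).
  destruct (search_step_cases t (F (t :: xs))) as [[? ?]|[[? ?]|[? ?]]]; lia.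
Qed.

Lemma min_search_after F xs n :
  (forall m, m < n -> 2 <= F (m :: xs)) -> F (n :: xs) = 1 ->
  forall t, n < t -> min_search F xs t = S (S n).
Proof.
  intros Hm Hn t; induction t as [|t IH]; intros Ht; [lia|].
  simpl. destruct (Nat.eq_dec t n) as [->|].
  - rewrite (min_search_before F xs n Hm n), Hn by lia. unfold search_step; simpl; lia.
  - rewrite IH by lia. simpl; lia.
Qed.

Lemma prec_loop_sound F G xs f g :
  (forall xs y, F xs = S y -> mu_eval f xs y) ->
  (forall xs y, G xs = S y -> mu_eval g xs y) ->
  forall n y, prec_loop F G xs n = S y -> mu_eval (mPrec f g) (n :: xs) y.
Proof.
  intros HF HG n; induction n as [|n IH]; simpl; intros y H.
  - constructor; auto.
  - destruct (prec_loop F G xs n) as [|v]; simpl in H; [discriminate|].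
    rewrite Nat.add_0_r in H. eapply ev_precS; eauto.
Qed.

Lemma eval_fuel_sound c s xs y : eval_fuel s c xs = S y -> mu_eval c xs y.
Proof.
  revert s xs y.
  induction c as [| |i|f gs IHf IHgs|f g IHf IHg|f IHf] using mu_code_nested_ind;
    intros s xs y Hev; simpl in Hev.
  - injection Hev as <-; constructor.
  - destruct xs; [discriminate|]. injection Hev as <-; constructor.
  - destruct (i <? length xs) eqn:E; [|discriminate].
    injection Hev as <-. constructor. apply Nat.ltb_lt; assumption.
  - apply mul_signum_eq_S in Hev as [Hf Hgs%prod_list_neq0].
    econstructor; [|exact (IHf _ _ _ Hf)].
    clear IHf Hf. induction IHgs as [|g gs IHg IHgs' IH]; simpl; constructor;
      inversion Hgs as [|? ? Hg Hgs']; subst.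
    + destruct (eval_fuel s g xs) eqn:E; [contradiction|]. exact (IHg _ _ _ E).
    + exact (IH Hgs').
  - destruct xs as [|n xs]; [discriminate|]. eapply prec_loop_sound; eauto.
  - destruct (min_search (eval_fuel s f) xs s) as [|[|n]] eqn:E; simpl in Hev; try discriminate.
    injection Hev as <-.
    apply min_search_eq_SS in E as [Hn Hlt].
    constructor; [exact (IHf _ _ _ Hn)|].
    intros m Hm. specialize (Hlt m Hm).
    destruct (eval_fuel s f (m :: xs)) as [|[|k]] eqn:E; try lia.
    exists k. exact (IHf _ _ _ E).
Qed.

Lemma eventually_forall_below (P : nat -> nat -> Prop) n :
  (forall m, m < n -> exists s0, forall s, s0 <= s -> P m s) ->
  exists s0, forall m, m < n -> forall s, s0 <= s -> P m s.
Proof.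
  induction n as [|n IH]; intros H.
  - exists 0; intros; lia.
  - destruct IH as [s1 H1]; [intros m Hm; apply H; lia|].
    destruct (H n) as [s2 H2]; [lia|].
    exists (s1 + s2). intros m Hm s Hs.
    destruct (Nat.eq_dec m n) as [->|]; [apply H2 | apply H1]; lia.
Qed.

Lemma map_pred_map_S (l : list nat) : map pred (map S l) = l.
Proof. induction l; simpl; f_equal; auto. Qed.

Fixpoint eval_fuel_complete c xs y (d : mu_eval c xs y) {struct d} :
  exists s0, forall s, s0 <= s -> eval_fuel s c xs = S y
with eval_fuel_complete_list gs xs ys (d : mu_evals gs xs ys) {struct d} :
  exists s0, forall s, s0 <= s -> map (fun g => eval_fuel s g xs) gs = map S ys.
Proof.
  - destruct d as [xs|x xs|i xs Hi|f gs xs ys y dgs df|f g xs y df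
                   |f g n xs y z dn dg|f xs n df dlt].
    + exists 0; reflexivity.
    + exists 0; reflexivity.
    + exists 0; intros; simpl. apply Nat.ltb_lt in Hi as ->. reflexivity.
    + destruct (eval_fuel_complete_list _ _ _ dgs) as [s1 H1].
      destruct (eval_fuel_complete _ _ _ df) as [s2 H2].
      exists (s1 + s2). intros s Hs. simpl.
      rewrite H1, map_pred_map_S, H2 by lia.
      pose proof (prod_list_map_S ys). destruct (prod_list (map S ys)); simpl; lia.
    + destruct (eval_fuel_complete _ _ _ df) as [s1 H1]. exists s1. exact H1.
    + destruct (eval_fuel_complete _ _ _ dn) as [s1 H1].
      destruct (eval_fuel_complete _ _ _ dg) as [s2 H2].
      exists (s1 + s2). intros s Hs. specialize (H1 s ltac:(lia)). simpl in H1 |- *.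
      rewrite H1. simpl. rewrite H2 by lia. lia.
    + destruct (eval_fuel_complete _ _ _ df) as [s1 H1].
      destruct (eventually_forall_below (fun m s => 2 <= eval_fuel s f (m :: xs)) n)
        as [s2 H2].
      { intros m Hm. destruct (dlt m Hm) as [k dk].
        destruct (eval_fuel_complete _ _ _ dk) as [s2 H2].
        exists s2. intros s Hs. rewrite H2 by assumption. lia. }
      exists (s1 + s2 + S n). intros s Hs. simpl.
      rewrite (min_search_after (eval_fuel s f) xs n); auto; try lia.
      * intros m Hm. apply H2; lia.
      * apply H1; lia.
  - destruct d as [xs|g gs xs y ys dg dgs].
    + exists 0; reflexivity.
    + destruct (eval_fuel_complete _ _ _ dg) as [s1 H1].
      destruct (eval_fuel_complete_list _ _ _ dgs) as [s2 H2].
      exists (s1 + s2). intros s Hs. simpl. rewrite H1, H2 by lia. reflexivity.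
Qed.

Lemma eval_proj i xs y : i < length xs -> nth i xs 0 = y -> mu_eval (mProj i) xs y.
Proof. intros Hi <-; constructor; exact Hi. Qed.

Ltac solve_proj := apply eval_proj; simpl; [lia | reflexivity].

Lemma eval_proj_seq xs pre :
  mu_evals (map mProj (seq (length pre) (length xs))) (pre ++ xs) xs.
Proof.
  revert pre; induction xs as [|x xs IH]; intros pre; simpl; constructor.
  - apply eval_proj; [rewrite length_app; simpl; lia|].
    rewrite app_nth2, Nat.sub_diag by lia. reflexivity.
  - specialize (IH (pre ++ [x])). rewrite length_app, <- app_assoc in IH.
    simpl in IH. rewrite Nat.add_1_r in IH. exact IH.
Qed.

Lemma eval_comp1 F K xs a b :
  mu_eval K xs a -> mu_eval F [a] b -> mu_eval (mComp F [K]) xs b.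
Proof. intros. econstructor; [|eassumption]. repeat econstructor; eassumption. Qed.

Lemma eval_comp2 F K1 K2 xs a1 a2 b :
  mu_eval K1 xs a1 -> mu_eval K2 xs a2 -> mu_eval F [a1; a2] b ->
  mu_eval (mComp F [K1; K2]) xs b.
Proof. intros. econstructor; [|eassumption]. repeat econstructor; eassumption. Qed.

Fixpoint code_const (k : nat) : mu_code :=
  match k with 0 => mZero | S k => mComp mSucc [code_const k] end.
Definition code_pred : mu_code := mPrec mZero (mProj 0).
Definition code_add : mu_code := mPrec (mProj 0) (mComp mSucc [mProj 1]).
Definition code_mul : mu_code := mPrec mZero (mComp code_add [mProj 1; mProj 2]).
Definition code_signum : mu_code := mPrec mZero (code_const 1).
Definition code_is_zero : mu_code := mPrec (code_const 1) mZero.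
Definition code_sub : mu_code := mPrec (mProj 0) (mComp code_pred [mProj 1]).

Lemma code_const_spec k xs : mu_eval (code_const k) xs k.
Proof. induction k; simpl; [constructor|]. eapply eval_comp1; [eassumption | constructor]. Qed.

Lemma code_pred_spec x xs : mu_eval code_pred (x :: xs) (pred x).
Proof.
  induction x; [repeat constructor|].
  eapply ev_precS; [eassumption | solve_proj].
Qed.

Lemma code_add_spec x y xs : mu_eval code_add (x :: y :: xs) (x + y).
Proof.
  induction x.
  - constructor; solve_proj.
  - eapply ev_precS; [eassumption|]. eapply eval_comp1; [solve_proj | constructor].
Qed.

Lemma code_mul_spec x y xs : mu_eval code_mul (x :: y :: xs) (x * y).
Proof.
  induction x; [repeat constructor|].
  eapply ev_precS; [eassumption|].
  eapply eval_comp2; [solve_proj | solve_proj|].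
  replace (S x * y) with (x * y + y) by lia. apply code_add_spec.
Qed.

Lemma code_signum_spec x xs : mu_eval code_signum (x :: xs) (signum x).
Proof.
  induction x; [repeat constructor|].
  eapply ev_precS; [eassumption | apply code_const_spec].
Qed.

Lemma code_is_zero_spec x xs : mu_eval code_is_zero (x :: xs) (is_zero x).
Proof.
  induction x; [constructor; apply code_const_spec|].
  eapply ev_precS; [eassumption | constructor].
Qed.

Lemma code_sub_spec y x xs : mu_eval code_sub (y :: x :: xs) (x - y).
Proof.
  induction y.
  - constructor. replace (x - 0) with x by lia. solve_proj.
  - eapply ev_precS; [eassumption|]. eapply eval_comp1; [solve_proj|].
    replace (x - S y) with (pred (x - y)) by lia. apply code_pred_spec.
Qed.

Definition op_succ (K : mu_code) : mu_code := mComp mSucc [K].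
Definition op_pred (K : mu_code) : mu_code := mComp code_pred [K].
Definition op_signum (K : mu_code) : mu_code := mComp code_signum [K].
Definition op_is_zero (K : mu_code) : mu_code := mComp code_is_zero [K].
Definition op_add (K1 K2 : mu_code) : mu_code := mComp code_add [K1; K2].
Definition op_mul (K1 K2 : mu_code) : mu_code := mComp code_mul [K1; K2].
Definition op_sub (K1 K2 : mu_code) : mu_code := mComp code_sub [K2; K1].

Section Operations.
Variables (xs : list nat) (K K1 K2 : mu_code) (a b : nat).
Hypotheses (HK : mu_eval K xs a) (HK1 : mu_eval K1 xs a) (HK2 : mu_eval K2 xs b).

Lemma eval_op_succ : mu_eval (op_succ K) xs (S a).
Proof. eapply eval_comp1; [exact HK | constructor]. Qed.

Lemma eval_op_pred : mu_eval (op_pred K) xs (pred a).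
Proof. eapply eval_comp1; [exact HK | apply code_pred_spec]. Qed.

Lemma eval_op_signum : mu_eval (op_signum K) xs (signum a).
Proof. eapply eval_comp1; [exact HK | apply code_signum_spec]. Qed.

Lemma eval_op_is_zero : mu_eval (op_is_zero K) xs (is_zero a).
Proof. eapply eval_comp1; [exact HK | apply code_is_zero_spec]. Qed.

Lemma eval_op_add : mu_eval (op_add K1 K2) xs (a + b).
Proof. eapply eval_comp2; [exact HK1 | exact HK2 | apply code_add_spec]. Qed.

Lemma eval_op_mul : mu_eval (op_mul K1 K2) xs (a * b).
Proof. eapply eval_comp2; [exact HK1 | exact HK2 | apply code_mul_spec]. Qed.

Lemma eval_op_sub : mu_eval (op_sub K1 K2) xs (a - b).
Proof. eapply eval_comp2; [exact HK2 | exact HK1 | apply code_sub_spec]. Qed.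

End Operations.

Fixpoint nsum (f : nat -> nat) (n : nat) : nat :=
  match n with 0 => 0 | S m => nsum f m + f m end.

(* [K] sees the argument list [i :: acc :: xs], [acc] being the partial sum. *)
Definition op_sum (K : mu_code) : mu_code := mPrec mZero (op_add (mProj 1) K).

Lemma eval_op_sum K f xs n :
  (forall i acc, mu_eval K (i :: acc :: xs) (f i)) -> mu_eval (op_sum K) (n :: xs) (nsum f n).
Proof.
  intros HK; induction n; simpl; [repeat constructor|].
  eapply ev_precS; [eassumption|]. apply eval_op_add; [solve_proj | apply HK].
Qed.

Lemma eval_mMin K f xs u :
  (forall s, mu_eval K (s :: xs) (f s)) -> f u = 0 -> (forall m, m < u -> f m <> 0) ->
  mu_eval (mMin K) xs u.
Proof.
  intros HK Hu Hlt. constructor; [rewrite <- Hu; apply HK|].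
  intros m Hm. specialize (Hlt m Hm).
  destruct (f m) as [|k] eqn:E; [contradiction|]. exists k. rewrite <- E; apply HK.
Qed.

(* Compiled codes take the fuel as an extra first argument. *)

Fixpoint code_prod (Ks : list mu_code) : mu_code :=
  match Ks with [] => code_const 1 | K :: Ks => op_mul K (code_prod Ks) end.

Definition compile_comp (Kf : mu_code) (Ks : list mu_code) : mu_code :=
  op_mul (mComp Kf (mProj 0 :: map op_pred Ks)) (op_signum (code_prod Ks)).

Definition compile_prec (Kf Kg : mu_code) (n : nat) : mu_code :=
  mComp (mPrec Kf (op_mul (op_signum (mProj 1))
                     (mComp Kg (mProj 2 :: mProj 0 :: op_pred (mProj 1) :: map mProj (seq 3 n)))))
        (mProj 1 :: mProj 0 :: map mProj (seq 2 n)).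

Definition compile_search_step (Kf : mu_code) (n : nat) : mu_code :=
  let W := mComp Kf (mProj 2 :: mProj 0 :: map mProj (seq 3 n)) in
  op_add (mProj 1)
    (op_mul (op_is_zero (mProj 1))
       (op_add (op_is_zero W)
          (op_mul (op_is_zero (op_pred W)) (op_mul (op_signum W) (op_succ (op_succ (mProj 0))))))).

Definition compile_min (Kf : mu_code) (n : nat) : mu_code :=
  op_pred (mComp (mPrec mZero (compile_search_step Kf n))
                 (mProj 0 :: mProj 0 :: map mProj (seq 1 n))).

Fixpoint eval_fuel_code (c : mu_code) (n : nat) {struct c} : mu_code :=
  match c with
  | mZero => code_const 1
  | mSucc => match n with 0 => mZero | _ => op_succ (op_succ (mProj 1)) end
  | mProj i => if i <? n then op_succ (mProj (S i)) else mZero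
  | mComp f gs => compile_comp (eval_fuel_code f (length gs)) (map (fun g => eval_fuel_code g n) gs)
  | mPrec f g =>
      match n with
      | 0 => mZero
      | S n' => compile_prec (eval_fuel_code f n') (eval_fuel_code g (S (S n'))) n'
      end
  | mMin f => compile_min (eval_fuel_code f (S n)) n
  end.

Lemma compile_comp_spec Kf Ks s xs vs y :
  Forall2 (fun K v => mu_eval K (s :: xs) v) Ks vs -> mu_eval Kf (s :: map pred vs) y ->
  mu_eval (compile_comp Kf Ks) (s :: xs) (y * signum (prod_list vs)).
Proof.
  intros HKs Hf. apply eval_op_mul.
  - econstructor; [|exact Hf]. constructor; [solve_proj|].
    clear Hf. induction HKs; simpl; constructor; try apply eval_op_pred; assumption.
  - apply eval_op_signum.
    clear Hf. induction HKs; [exact (code_const_spec 1 _) | apply eval_op_mul; assumption].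
Qed.

Lemma compile_prec_spec Kf Kg F G s xs n :
  mu_eval Kf (s :: xs) (F xs) ->
  (forall m v, mu_eval Kg (s :: m :: v :: xs) (G (m :: v :: xs))) ->
  mu_eval (compile_prec Kf Kg (length xs)) (s :: n :: xs) (prec_loop F G xs n).
Proof.
  intros Hf Hg. econstructor.
  - constructor; [solve_proj|]. constructor; [solve_proj|]. exact (eval_proj_seq xs [s; n]).
  - induction n as [|n IH]; simpl; [constructor; exact Hf|].
    eapply ev_precS; [exact IH|].
    apply eval_op_mul; [apply eval_op_signum; solve_proj|].
    econstructor; [|apply Hg].
    constructor; [solve_proj|]. constructor; [solve_proj|].
    constructor; [apply eval_op_pred; solve_proj|]. exact (eval_proj_seq xs [n; _; s]).
Qed.

Lemma compile_min_spec Kf F s xs :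
  (forall t, mu_eval Kf (s :: t :: xs) (F (t :: xs))) ->
  mu_eval (compile_min Kf (length xs)) (s :: xs) (pred (min_search F xs s)).
Proof.
  intros Hf. apply eval_op_pred. econstructor.
  - constructor; [solve_proj|]. constructor; [solve_proj|]. exact (eval_proj_seq xs [s]).
  - enough (Ht : forall t, mu_eval (mPrec mZero (compile_search_step Kf (length xs)))
                                    (t :: s :: xs) (min_search F xs t)) by apply Ht.
    intros t; induction t as [|t IH]; simpl; [repeat constructor|].
    eapply ev_precS; [exact IH|].
    assert (HW : mu_eval (mComp Kf (mProj 2 :: mProj 0 :: map mProj (seq 3 (length xs))))
                   (t :: min_search F xs t :: s :: xs) (F (t :: xs))).
    { econstructor; [|apply Hf].
      constructor; [solve_proj|]. constructor; [solve_proj|]. exact (eval_proj_seq xs [t; _; s]). }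
    unfold compile_search_step, search_step.
    repeat first [ exact HW | solve_proj | apply eval_op_add | apply eval_op_mul
                 | apply eval_op_is_zero | apply eval_op_pred | apply eval_op_signum
                 | apply eval_op_succ ].
Qed.

Lemma eval_fuel_code_spec c n s xs :
  length xs = n -> mu_eval (eval_fuel_code c n) (s :: xs) (eval_fuel s c xs).
Proof.
  revert n s xs.
  induction c as [| |i|f gs IHf IHgs|f g IHf IHg|f IHf] using mu_code_nested_ind;
    intros n s xs Hn; simpl.
  - exact (code_const_spec 1 _).
  - destruct n, xs; simpl in Hn; try discriminate; [constructor|].
    do 2 apply eval_op_succ. solve_proj.
  - subst n. destruct (i <? length xs) eqn:E; [|constructor].
    apply Nat.ltb_lt in E. apply eval_op_succ, eval_proj; simpl; [lia | reflexivity].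
  - apply compile_comp_spec.
    + induction IHgs; simpl; constructor; auto.
    + rewrite map_map. apply IHf. rewrite !length_map. reflexivity.
  - destruct n as [|n], xs as [|m xs]; simpl in Hn; try discriminate; [constructor|].
    injection Hn as <-. apply compile_prec_spec; [apply IHf | intros; apply IHg]; reflexivity.
  - subst n. apply compile_min_spec. intros t. apply IHf. reflexivity.
Qed.

Lemma nsum_eq0 f n : nsum f n = 0 <-> forall i, i < n -> f i = 0.
Proof.
  induction n as [|n IH]; simpl; split.
  - intros _ i Hi; lia.
  - reflexivity.
  - intros H i Hi. destruct (Nat.eq_dec i n) as [->|]; [lia | apply IH; lia].
  - intros H. rewrite (proj2 IH), (H n) by first [lia | intros; apply H; lia]. reflexivity.
Qed.

Lemma nsum_le f g n : (forall i, i < n -> f i <= g i) -> nsum f n <= nsum g n.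
Proof.
  induction n as [|n IH]; simpl; intros H; [lia|].
  pose proof (H n ltac:(lia)). pose proof (IH ltac:(intros; apply H; lia)). lia.
Qed.

Lemma nsum_add f g n : nsum (fun i => f i + g i) n = nsum f n + nsum g n.
Proof. induction n; simpl; lia. Qed.

Lemma nsum_split f h k : nsum f (h + k) = nsum f h + nsum (fun i => f (h + i)) k.
Proof. induction k as [|k IH]; simpl; rewrite ?Nat.add_0_r, ?Nat.add_succ_r; simpl; lia. Qed.

Lemma count_below_nsum X N : count_below X N = nsum (char01 X) N.
Proof. induction N; simpl; congruence. Qed.

Section StageApproximation.

Variable c : mu_code.

(* The stage-[s] approximation of the set enumerated by [c]: [x] has entered
   by stage [s] when [c] converges on [x] with some fuel [t < s]. *)
Definition stage_hits (s x : nat) : nat := nsum (fun t => signum (eval_fuel t c [x])) s.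
Definition stage_char (s x : nat) : nat := signum (stage_hits s x).
Definition stage_count (s N : nat) : nat := nsum (stage_char s) N.

Lemma stage_char_mono s s' x : s <= s' -> stage_char s x <= stage_char s' x.
Proof.
  intros Hs. unfold stage_char.
  assert (stage_hits s x <= stage_hits s' x) by (unfold stage_hits; induction Hs; simpl; lia).
  destruct (stage_hits s x), (stage_hits s' x); simpl; lia.
Qed.

Variable A : nat -> bool.
Hypothesis HA : forall n, A n = true <-> exists y, mu_eval c [n] y.

Lemma stage_char_le s x : stage_char s x <= char01 A x.
Proof.
  unfold stage_char, char01.
  destruct (stage_hits s x) eqn:E; simpl; [lia|].
  assert (Hhit : exists t y, eval_fuel t c [x] = S y).
  { clear HA. revert E; unfold stage_hits; induction s as [|s IH]; simpl; intros E; [lia|].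
    destruct (eval_fuel s c [x]) eqn:Ev; simpl in E; [apply IH; lia | eauto]. }
  destruct Hhit as [t [y Hy]].
  replace (A x) with true; [lia|].
  symmetry. apply HA. exists y. exact (eval_fuel_sound _ _ _ _ Hy).
Qed.

Lemma stage_char_eventually x : A x = true -> exists s0, forall s, s0 <= s -> stage_char s x = 1.
Proof.
  intros [y Hy]%HA.
  destruct (eval_fuel_complete _ _ _ Hy) as [s0 Hs0].
  exists (S s0). intros s Hs.
  apply Nat.le_antisymm.
  - unfold stage_char. destruct (stage_hits s x); simpl; lia.
  - transitivity (stage_char (S s0) x); [|exact (stage_char_mono _ _ x Hs)].
    unfold stage_char, stage_hits; simpl. rewrite Hs0, Nat.add_1_r by lia. simpl. lia.
Qed.

Lemma stage_count_eventually N :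
  exists s0, forall s, s0 <= s -> count_below A N <= stage_count s N.
Proof.
  destruct (eventually_forall_below (fun y s => char01 A y <= stage_char s y) N) as [s0 Hs0].
  - intros y _. unfold char01. destruct (A y) eqn:E.
    + destruct (stage_char_eventually y E) as [s0 Hs0].
      exists s0; intros s Hs. rewrite Hs0 by assumption. lia.
    + exists 0; intros; lia.
  - exists s0. intros s Hs. rewrite count_below_nsum.
    apply nsum_le. intros; apply Hs0; assumption.
Qed.

Definition code_stage_hits : mu_code :=
  op_sum (op_signum (mComp (eval_fuel_code c 1) [mProj 0; mProj 2])).
Definition code_stage_char : mu_code := op_signum code_stage_hits.
Definition code_stage_count : mu_code := op_sum (mComp code_stage_char [mProj 2; mProj 0]).

Lemma code_stage_char_spec s x tl : mu_eval code_stage_char (s :: x :: tl) (stage_char s x).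
Proof.
  apply eval_op_signum, eval_op_sum. intros t acc.
  apply eval_op_signum. econstructor; [|exact (eval_fuel_code_spec c 1 t [x] eq_refl)].
  repeat (constructor; [solve_proj|]). constructor.
Qed.

Lemma code_stage_count_spec N s tl : mu_eval code_stage_count (N :: s :: tl) (stage_count s N).
Proof.
  apply eval_op_sum. intros y acc.
  econstructor; [|exact (code_stage_char_spec s y [])].
  repeat (constructor; [solve_proj|]). constructor.
Qed.

End StageApproximation.

Lemma exists_min_in_interval (f : nat -> nat) h k :
  0 < k -> exists x, h <= x < h + k /\ forall y, h <= y < h + k -> f x <= f y.
Proof.
  induction k as [|k IH]; intros Hk; [lia|].
  destruct (Nat.eq_dec k 0) as [->|Hk0].
  - exists h. split; [lia|]. intros y Hy. replace y with h by lia. lia.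
  - destruct IH as [x [Hx Hmin]]; [lia|].
    destruct (Nat.le_gt_cases (f x) (f (h + k))).
    + exists x. split; [lia|]. intros y Hy.
      destruct (Nat.eq_dec y (h + k)) as [->|]; [assumption | apply Hmin; lia].
    + exists (h + k). split; [lia|]. intros y Hy.
      destruct (Nat.eq_dec y (h + k)) as [->|]; [lia|]. specialize (Hmin y ltac:(lia)). lia.
Qed.

Section LeastStages.

Variables (approx : nat -> nat -> nat) (A B D : nat -> bool) (u : nat -> nat).
Hypotheses
  (approx_mono : forall s s' x, s <= s' -> approx s x <= approx s' x)
  (approx_le : forall s x, approx s x <= char01 A x)
  (char01_B : forall x, char01 B x = approx (u x) x)
  (char01_D : forall x, char01 D x + char01 B x = char01 A x).

(* Take [x] with [u x] least on [[N/2, N)].  By monotonicity the stage [u x]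
   sees at most [B] on [[N/2, N)], and at most [A] below [N/2]. *)
Lemma exists_stage_missing_below_half N :
  1 <= N -> exists x, N / 2 <= x < N /\
    nsum (approx (u x)) N + count_below D N <= count_below A N + count_below D (N / 2).
Proof.
  intros HN. set (h := N / 2).
  assert (Hh : h <= N) by (apply Nat.Div0.div_le_upper_bound; lia).
  assert (Hhk : N = h + (N - h)) by lia.
  destruct (exists_min_in_interval u h (N - h)) as [x [Hx Hmin]];
    [unfold h; pose proof (Nat.div_lt N 2); lia|].
  exists x. split; [lia|].
  rewrite !count_below_nsum, Hhk, !nsum_split.
  assert (Hlow : nsum (approx (u x)) h <= nsum (char01 A) h)
    by (apply nsum_le; intros; apply approx_le).
  assert (Hhigh : nsum (fun i => approx (u x) (h + i)) (N - h)
                  + nsum (fun i => char01 D (h + i)) (N - h)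
                  <= nsum (fun i => char01 A (h + i)) (N - h)).
  { rewrite <- nsum_add. apply nsum_le. intros i Hi.
    rewrite <- (char01_D (h + i)), char01_B.
    pose proof (approx_mono _ _ (h + i) (Hmin (h + i) ltac:(lia))). lia. }
  lia.
Qed.

End LeastStages.

Section Construction.

Variables (c : mu_code) (A : nat -> bool) (a b C : nat).
Hypothesis HA : forall n, A n = true <-> exists y, mu_eval c [n] y.
Hypothesis lower_bound : forall N, a * N <= b * count_below A N + C.

(* The window [N < 2x+2] makes the stage of every [x >= N/2] good at [N]. *)
Definition stage_defect (s x : nat) : nat :=
  nsum (fun N => signum (a * N - (b * stage_count c s N + C))) (S (S (x + x))).

Lemma stage_defect_eq0 s x :
  stage_defect s x = 0 <-> forall N, N < S (S (x + x)) -> a * N <= b * stage_count c s N + C.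
Proof.
  unfold stage_defect. rewrite nsum_eq0.
  split; intros H N HN; specialize (H N HN);
    destruct (a * N - (b * stage_count c s N + C)) eqn:E; simpl in *; lia.
Qed.

Lemma stage_defect_eventually_zero x : exists s, stage_defect s x = 0.
Proof.
  destruct (eventually_forall_below (fun N s => count_below A N <= stage_count c s N)
              (S (S (x + x)))) as [s0 Hs0].
  { intros N _. exact (stage_count_eventually c A HA N). }
  exists s0. apply stage_defect_eq0. intros N HN.
  specialize (Hs0 N HN s0 (le_n s0)). specialize (lower_bound N). nia.
Qed.

Definition least_stage (x : nat) : nat :=
  proj1_sig (epsilon_smallest (fun s => stage_defect s x = 0)
               (fun s => Nat.eq_dec (stage_defect s x) 0) (stage_defect_eventually_zero x)).

Lemma least_stage_spec x :
  stage_defect (least_stage x) x = 0 /\ forall s, s < least_stage x -> stage_defect s x <> 0.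
Proof.
  unfold least_stage. destruct epsilon_smallest as [u [Hu Hmin]]; simpl.
  split; [exact Hu|]. intros s Hs Hs0. specialize (Hmin s Hs0). lia.
Qed.

Definition kept (x : nat) : bool := negb (stage_hits c (least_stage x) x =? 0).

Lemma char01_kept x : char01 kept x = stage_char c (least_stage x) x.
Proof. unfold char01, kept, stage_char. destruct (stage_hits c (least_stage x) x); reflexivity. Qed.

Lemma kept_subset : subset_of kept A.
Proof.
  intros x Hx. pose proof (stage_char_le c A HA (least_stage x) x) as Hle.
  rewrite <- char01_kept in Hle. unfold char01 in Hle. rewrite Hx in Hle.
  destruct (A x); [reflexivity | lia].
Qed.

Definition code_stage_defect : mu_code :=
  let count := mComp (code_stage_count c) [mProj 0; mProj 2] in
  let term := op_signum (op_sub (op_mul (code_const a) (mProj 0))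
                                (op_add (op_mul (code_const b) count) (code_const C))) in
  mComp (op_sum term) [op_succ (op_succ (op_add (mProj 1) (mProj 1))); mProj 0].

Lemma code_stage_defect_spec s x : mu_eval code_stage_defect [s; x] (stage_defect s x).
Proof.
  econstructor.
  - constructor; [do 2 apply eval_op_succ; apply eval_op_add; solve_proj|].
    constructor; [solve_proj | constructor].
  - apply eval_op_sum. intros N acc.
    apply eval_op_signum, eval_op_sub; [apply eval_op_mul; [apply code_const_spec | solve_proj]|].
    apply eval_op_add; [|apply code_const_spec]. apply eval_op_mul; [apply code_const_spec|].
    econstructor; [|exact (code_stage_count_spec c N s [])].
    constructor; [solve_proj|]. constructor; [solve_proj | constructor].
Qed.

Lemma kept_computable : computable_set kept.
Proof.
  exists (mComp (code_stage_char c) [mMin code_stage_defect; mProj 0]). intros x.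
  rewrite char01_kept. econstructor; [|exact (code_stage_char_spec c _ x [])].
  constructor; [|constructor; [solve_proj | constructor]].
  apply eval_mMin with (f := fun s => stage_defect s x);
    [intros s; apply code_stage_defect_spec|..];
    apply least_stage_spec.
Qed.

Lemma missed_count_recurrence N :
  1 <= N ->
  b * count_below (symdiff A kept) N + a * N
    <= b * count_below A N + C + b * count_below (symdiff A kept) (N / 2).
Proof.
  intros HN.
  destruct (exists_stage_missing_below_half (stage_char c) A kept (symdiff A kept) least_stage
              (stage_char_mono c) (stage_char_le c A HA) char01_kept) with (N := N)
    as [x [Hx Hcount]]; [|exact HN|].
  { intros y. unfold char01, symdiff. pose proof (kept_subset y) as Hy.
    destruct (A y), (kept y); simpl; auto. discriminate (Hy eq_refl). }
  assert (Hstage : a * N <= b * stage_count c (least_stage x) N + C).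
  { apply (stage_defect_eq0 (least_stage x) x); [apply least_stage_spec|].
    pose proof (Nat.div_mod_eq N 2). pose proof (Nat.mod_upper_bound N 2). lia. }
  apply (Nat.mul_le_mono_l _ _ b) in Hcount. unfold stage_count in Hstage. lia.
Qed.

End Construction.

Open Scope R_scope.

Lemma count_below_le X N : (count_below X N <= N)%nat.
Proof. induction N; simpl; [lia|]. unfold char01; destruct (X N); lia. Qed.

Lemma count_eventually_near X l e :
  is_lim_seq (rho_seq X) (Finite l) -> 0 < e ->
  exists N1, forall N, (N1 <= N)%nat -> Rabs (INR (count_below X N) - l * INR N) <= e * INR N.
Proof.
  intros Hl He. apply is_lim_seq_spec in Hl. destruct (Hl (mkposreal e He)) as [N0 HN0].
  exists (S N0). intros [|k] Hk; [lia|].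
  specialize (HN0 k ltac:(lia)). unfold rho_seq, rho_n in HN0; simpl pos in HN0.
  assert (Hk0 : 0 < INR (S k)) by (apply lt_0_INR; lia).
  replace (INR (count_below X (S k)) - l * INR (S k))
    with ((INR (count_below X (S k)) / INR (S k) - l) * INR (S k)) by (field; lra).
  rewrite Rabs_mult, (Rabs_pos_eq (INR (S k))) by lra.
  apply Rmult_le_compat_r; lra.
Qed.

Lemma exists_linear_lower_bound X l (b : nat) :
  is_lim_seq (rho_seq X) (Finite l) -> (0 < b)%nat ->
  exists a C : nat, INR b * l - 2 < INR a /\ forall N, (a * N <= b * count_below X N + C)%nat.
Proof.
  intros Hl Hb. assert (Hbr : 0 < INR b) by (apply lt_0_INR; exact Hb).
  destruct (archimed (INR b * l)) as [Hup1 Hup2].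
  set (z := (up (INR b * l) - 2)%Z).
  assert (Hz : IZR z = IZR (up (INR b * l)) - 2) by (unfold z; rewrite minus_IZR; reflexivity).
  destruct (Z_le_gt_dec z 0) as [Hz0|Hz0].
  - exists 0%nat, 0%nat. split; [|intros; lia].
    apply IZR_le in Hz0. simpl. lra.
  - set (a := Z.to_nat z).
    assert (Ha : INR a = IZR z) by (unfold a; rewrite INR_IZR_INZ, Z2Nat.id; [reflexivity | lia]).
    destruct (count_eventually_near X l (/ INR b) Hl ltac:(apply Rinv_0_lt_compat; lra))
      as [N1 HN1].
    exists a, (a * N1)%nat. split; [lra|]. intros N.
    destruct (le_lt_dec N1 N) as [HN|HN]; [|nia].
    specialize (HN1 N HN). apply Rabs_le_between in HN1.
    enough (INR (a * N) <= INR (b * count_below X N)) by (apply INR_le in H; lia).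
    rewrite !mult_INR.
    assert (Hbl : INR b * (l * INR N - / INR b * INR N) = (INR b * l - 1) * INR N)
      by (field; lra).
    pose proof (pos_INR N).
    apply Rle_trans with ((INR b * l - 1) * INR N); [apply Rmult_le_compat_r; lra|].
    rewrite <- Hbl. apply Rmult_le_compat_l; lra.
Qed.

Lemma halving_linear_bound (d : nat -> R) (q : R) (N0 : nat) :
  0 <= q -> (forall N, d N <= INR N) ->
  (forall N, (N0 <= N)%nat -> d N <= q * INR N + d (N / 2)%nat) ->
  forall N, d N <= 2 * q * INR N + INR N0.
Proof.
  intros Hq Hd Hrec N. induction N as [N IH] using lt_wf_ind.
  pose proof (pos_INR N).
  destruct (le_lt_dec N0 N) as [HN|HN]; [destruct (Nat.eq_dec N 0) as [->|HN0]|].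
  - simpl in *. specialize (Hd 0%nat). simpl in Hd. pose proof (pos_INR N0). lra.
  - assert (Hhalf : 2 * INR (N / 2) <= INR N).
    { replace 2 with (INR 2) by reflexivity. rewrite <- mult_INR. apply le_INR.
      pose proof (Nat.div_mod_eq N 2). lia. }
    specialize (IH (N / 2)%nat ltac:(apply Nat.div_lt; lia)).
    specialize (Hrec N HN). nra.
  - apply lt_INR in HN. specialize (Hd N). nra.
Qed.

Lemma upper_density_lt_of_linear_bound X r M eps :
  0 <= M -> r < eps -> (forall N, INR (count_below X N) <= r * INR N + M) ->
  Rbar_lt (upper_density X) (Finite eps).
Proof.
  intros HM Hr Hbound.
  destruct (INR_archimed ((eps - r) / 2) M ltac:(lra)) as [K HK].
  apply Rbar_le_lt_trans with (Finite (r + (eps - r) / 2)); [|simpl; lra].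
  rewrite <- LimSup_seq_const. apply LimSup_le. exists K. intros k Hk.
  unfold rho_seq, rho_n.
  assert (Hk0 : 0 < INR (S k)) by (apply lt_0_INR; lia).
  apply Rmult_le_reg_r with (INR (S k)); [exact Hk0|].
  unfold Rdiv. rewrite Rmult_assoc, Rinv_l, Rmult_1_r by lra.
  specialize (Hbound (S k)). apply le_INR in Hk. rewrite S_INR in *. nra.
Qed.

Lemma upper_density_lt_of_recurrence (A D : nat -> bool) l eps (a b C : nat) :
  0 < eps -> is_lim_seq (rho_seq A) (Finite l) ->
  16 < INR b * eps -> INR b * l - 2 < INR a ->
  (forall N, (1 <= N)%nat ->
     (b * count_below D N + a * N <= b * count_below A N + C + b * count_below D (N / 2))%nat) ->
  Rbar_lt (upper_density D) (Finite eps).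
Proof.
  intros Heps Hl Hb Ha Hrec.
  assert (Hbr : 0 < INR b) by nra.
  destruct (count_eventually_near A l (eps / 16) Hl ltac:(lra)) as [N1 HN1].
  destruct (INR_archimed (INR b * eps / 16) (INR C) ltac:(nra)) as [N2 HN2].
  set (N0 := S (N1 + N2)).
  assert (Hstep : forall N, (N0 <= N)%nat ->
            INR (count_below D N) <= eps / 4 * INR N + INR (count_below D (N / 2))).
  { intros N HN. unfold N0 in HN. pose proof (pos_INR N) as Hn.
    specialize (Hrec N ltac:(lia)). apply le_INR in Hrec.
    rewrite !plus_INR, !mult_INR in Hrec.
    specialize (HN1 N ltac:(lia)). apply Rabs_le_between in HN1.
    assert (HN2' : INR N2 <= INR N) by (apply le_INR; lia).
    assert (HA : INR b * INR (count_below A N) <= INR b * (l + eps / 16) * INR N) by nra.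
    assert (Ha' : (INR b * l - 2) * INR N <= INR a * INR N) by nra.
    assert (HC : INR C <= INR b * eps / 16 * INR N) by nra.
    assert (H2 : 2 * INR N <= INR b * eps / 8 * INR N) by nra.
    apply Rmult_le_reg_l with (INR b); [exact Hbr | lra]. }
  apply (upper_density_lt_of_linear_bound D (2 * (eps / 4)) (INR N0) eps);
    [apply pos_INR | lra|].
  apply halving_linear_bound; [lra | | exact Hstep].
  intros N. apply le_INR, count_below_le.
Qed.

Theorem mainTheorem8 (A : nat -> bool) (eps : R) :
  ce_set A -> has_density A -> (0 < eps)%R ->
  exists B : nat -> bool,
    computable_set B /\ subset_of B A /\ Rbar_lt (Dist A B) (Finite eps).
Proof.
  intros [c HA] [l Hl] Heps.
  destruct (INR_archimed eps 16 Heps) as [b Hb].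
  assert (Hb0 : (0 < b)%nat) by (destruct b; simpl in Hb; lra || lia).
  destruct (exists_linear_lower_bound A l b Hl Hb0) as [a [C [Ha Hlower]]].
  exists (kept c A a b C HA Hlower).
  split; [apply kept_computable|]. split; [apply kept_subset|].
  apply (upper_density_lt_of_recurrence A _ l eps a b C); [assumption.. | lra | assumption |].
  apply missed_count_recurrence.
Qed.
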